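(* Let $k$ be a positive integer and let $P=v_1v_2\cdots v_l$ be a path with $l\ge 2k$. Then $P$ has a dispersed $k$-placement $(\phi_1,\dots,\phi_k)$ in $K_l$ such that, for all indices $a,b$ with $|a-b|\ge 2k-1$, the $2k$ vertices $\phi_i(v_a),\phi_j(v_b)$ ($1\le i,j\le k$) are pairwise distinct.
   Context: For a graph $H$ on $m$ vertices, a $k$-placement of $H$ (in $K_m$) is a $k$-tuple $(\phi_1,\dots,\phi_k)$ of bijections $\phi_i:V(H)\to V(K_m)$ such that the edge sets $\phi_i(E(H))=\{\phi_i(x)\phi_i(y):xy\in E(H)\}$ are pairwise disjoint. A vertex $v$ is $k$-placed if $\phi_i(v)\ne\phi_j(v)$ for all $i\neq j$; the placement is dispersed if every vertex is $k$-placed. *)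

From mathcomp Require Import all_boot fingroup perm.
Set Implicit Arguments. Unset Strict Implicit. Unset Printing Implicit Defensive.

(* The path P = v_1 ... v_l is modelled on vertex set 'I_l, with v_{a+1}
   represented by the ordinal a (0-based); edges are {a, a+1}. *)
Definition path_edge (l : nat) (x y : 'I_l) : bool :=
  (val y == (val x).+1) || (val x == (val y).+1).

Definition edge_disjoint (l : nat) (phi psi : {perm 'I_l}) : Prop :=
  forall x y x' y' : 'I_l, path_edge x y -> path_edge x' y' ->
    ~ ((phi x == psi x') && (phi y == psi y')).

Definition placement (k l : nat) (phi : 'I_k -> {perm 'I_l}) : Prop :=
  forall i j : 'I_k, i != j -> edge_disjoint (phi i) (phi j).

Definition dispersed (k l : nat) (phi : 'I_k -> {perm 'I_l}) : Prop :=
  forall (v : 'I_l) (i j : 'I_k), i != j -> phi i v != phi j v.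

From mathcomp Require Import all_boot fingroup perm.
From mathcomp Require Import zify.
Set Implicit Arguments. Unset Strict Implicit. Unset Printing Implicit Defensive.

(* The cycle Z_(2l) double covers the path 0 - 1 - ... - (l-1) by folding:
   c and 2l-1-c lie over the same vertex, and they have opposite parities, so
   each vertex x has exactly one preimage [sheet q x] of each parity q.  The
   bijection [hop t p] lifts x to the sheet p, rotates the cycle by the odd
   number t, and projects back; the rotation carries the sheet p onto the other
   sheet, hence injectivity.  An edge {x, x+1} lifts to two points of the sheet
   p with sum 2l or 2l-2, so the lifts of its image to the other sheet sum to
   2t or 2t-2 (mod 2l): this invariant separates the images of edges under
   different parameters (t, p).  Placement i uses t = 2 (i/2) + 1 and p = odd i, and moves every
   vertex by at most t, which keeps far apart vertices apart. *)

Lemma modn_transfer a u v b c d :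
  a + u = b %[mod d] -> a + v = c %[mod d] -> b + v = c + u %[mod d].
Proof.
move=> Eb Ec; rewrite -modnDml -Eb modnDml -addnA [u + v]addnC addnA.
by rewrite -modnDml Ec modnDml.
Qed.

Lemma eq_or_negb (p p' : bool) : p' = p \/ p' = ~~ p.
Proof. by case: p; case: p'; [left | right | right | left]. Qed.

Lemma modn_lt_double a d : a < d.*2 -> a %% d = if a < d then a else a - d.
Proof.
case: ifP => [/modn_small // | /negbT]; rewrite -leqNgt => da ad.
by rewrite -{1}(subnK da) modnDr modn_small //; lia.
Qed.

Section DoubleCover.
Variable l : nat.
Local Notation n := l.*2.

Definition project (c : nat) : nat := if c < l then c else n.-1 - c.

Definition sheet (q : bool) (x : nat) : nat := if odd x == q then x else n.-1 - x.

Lemma project_lt c : c < n -> project c < l.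
Proof. by rewrite /project; case: ifP; lia. Qed.

Lemma sheet_lt q x : x < n -> sheet q x < n.
Proof. by rewrite /sheet; case: ifP; lia. Qed.

Lemma odd_sheet q x : x < n -> odd (sheet q x) = q.
Proof. by rewrite /sheet; case: q; case: ifP; lia. Qed.

Lemma sheet_id q c : odd c = q -> sheet q c = c.
Proof. by rewrite /sheet => ->; rewrite eqxx. Qed.

Lemma sheet_inj q x y : x < l -> y < l -> sheet q x = sheet q y -> x = y.
Proof. by rewrite /sheet; case: q; do 2 case: ifP; lia. Qed.

Lemma sheet_project q c : c < n -> sheet q (project c) = sheet q c.
Proof. by rewrite /sheet /project; case: q; do 3 case: ifP; lia. Qed.

Lemma sheetN q x : x < n -> sheet q x + sheet (~~ q) x = n.-1.
Proof. by rewrite /sheet; case: q; do 2 case: ifP; lia. Qed.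

Lemma sheetS q x : x.+1 < l -> sheet q x + sheet q x.+1 + (odd x == q).*2 = n.
Proof. by rewrite /sheet /=; case: q; case: (odd x) => /=; lia. Qed.

Definition sheet_sum (q : bool) (a b : nat) : nat := sheet q a + sheet q b.

Lemma sheet_sumN q a b : a < n -> b < n -> sheet_sum q a b + sheet_sum (~~ q) a b = (n.-1).*2.
Proof. by rewrite /sheet_sum => an bn; have := sheetN q an; have := sheetN q bn; lia. Qed.

Definition hop (t : nat) (p : bool) (x : nat) : nat := project ((sheet p x + t) %% n).

Lemma hop_lt t p x : x < l -> hop t p x < l.
Proof. by move=> xl; apply: project_lt; rewrite ltn_pmod //; lia. Qed.

Lemma hop_near t p x : x < l -> t < l -> hop t p x <= x + t /\ x <= hop t p x + t.
Proof.
move=> xl tl; rewrite /hop /project /sheet modn_lt_double; last by case: ifP; lia.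
by case: p; do 3 case: ifP; lia.
Qed.

Lemma sheet_hop t p x : odd t -> x < l -> sheet (~~ p) (hop t p x) = (sheet p x + t) %% n.
Proof.
move=> ot xl; have n_gt0 : 0 < n by lia.
by rewrite sheet_project ?ltn_pmod // sheet_id // odd_mod ?odd_double // oddD ot odd_sheet ?addbT //; lia.
Qed.

Lemma hop_inj t p x y : odd t -> x < l -> y < l -> hop t p x = hop t p y -> x = y.
Proof.
move=> ot xl yl /(congr1 (sheet (~~ p))); rewrite !sheet_hop // => /eqP.
rewrite eqn_modDr !modn_small ?sheet_lt; try lia.
by move/eqP; apply: sheet_inj.
Qed.

Lemma hop_neq t p t' p' x : odd t -> odd t' -> t + t' < n -> (t, p) != (t', p') ->
  x < l -> hop t p x != hop t' p' x.
Proof.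
have [-> | ->] := eq_or_negb p p'.
  move=> ot ot' tt'; rewrite xpair_eqE eqxx andbT => t_neq xl.
  apply/eqP => /(congr1 (sheet (~~ p))) /eqP; rewrite !sheet_hop //.
  by rewrite eqn_modDl !modn_small //; lia.
move=> ot ot' tt' _ xl; apply/eqP => /(congr1 (sheet (~~ p))); rewrite sheet_hop // => E.
have hop'_lt : hop t' (~~ p) x < n by have := hop_lt t' (~~ p) xl; lia.
have := sheet_hop (~~ p) ot' xl; rewrite negbK => E'.
have Nx := @sheetN p x ltac:(lia); have := sheetN p hop'_lt; rewrite {}E' -{}E => N.
have : n.-1 + (t + t') = n.-1 + 0 %[mod n].
  by rewrite addn0 -{1}Nx addnACA addnC -modnDm N.
by move/eqP; rewrite eqn_modDl mod0n modn_small //; lia.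
Qed.

Lemma hop_edge_sum t p x : odd t -> x.+1 < l ->
  sheet_sum (~~ p) (hop t p x) (hop t p x.+1) + (odd x == p).*2 = t.*2 %[mod n].
Proof.
move=> ot xl; rewrite /sheet_sum !sheet_hop //; try lia.
rewrite -modnDml modnDm modnDml; have := sheetS p xl => S.
by rewrite (_ : sheet p x + t + _ + _ = t.*2 + n) ?modnDr //; lia.
Qed.

Lemma hop_edge_sum_neq t p t' p' x y : odd t -> odd t' -> t + t' + 2 <= l ->
  (t, p) != (t', p') -> x.+1 < l -> y.+1 < l ->
  sheet_sum (~~ p) (hop t p x) (hop t p x.+1) != sheet_sum (~~ p) (hop t' p' y) (hop t' p' y.+1).
Proof.
have [-> | ->] := eq_or_negb p p'.
  move=> ot ot' tt'; rewrite xpair_eqE eqxx andbT => t_neq xl yl; apply/eqP => S.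
  have := hop_edge_sum p ot xl; have := hop_edge_sum p ot' yl; rewrite -S => Ey Ex.
  by move: (modn_transfer Ex Ey) => {S Ex Ey}; rewrite !modn_small; lia.
move=> ot ot' tt' _ xl yl; apply/eqP => S.
have hop_lt_n z : z < l -> hop t' (~~ p) z < n by move/(hop_lt t' (~~ p)); lia.
have := sheet_sumN p (hop_lt_n _ (ltnW yl)) (hop_lt_n _ yl).
have := hop_edge_sum p ot xl; have := hop_edge_sum (~~ p) ot' yl; rewrite negbK S => {S}.
move: (sheet_sum p _ _) (sheet_sum (~~ p) _ _) (odd x == p) (odd y == ~~ p).
move=> Sy Sy' ex ey Ey Ex N.
have : Sy' + ex.*2 + (Sy + ey.*2) + 2 = t.*2 + t'.*2 + 2 %[mod n].
  by rewrite -modnDml -[(_ + (Sy + _)) %% n]modnDm Ex Ey modnDm modnDml.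
rewrite (_ : Sy' + _ + _ + 2 = 2 * n + (ex.*2 + ey.*2)); last by clear -N xl; lia.
by rewrite modnMDl => {Ex Ey N}; rewrite !modn_small; lia.
Qed.

End DoubleCover.

Lemma edge_disjoint_weight l (phi psi : {perm 'I_l}) (w : 'I_l -> nat) :
  (forall x y x' y' : 'I_l, val y = (val x).+1 -> val y' = (val x').+1 ->
     w (phi x) + w (phi y) != w (psi x') + w (psi y')) ->
  edge_disjoint phi psi.
Proof.
move=> w_neq x y x' y' /orP[] /eqP xy /orP[] /eqP xy' /andP[/eqP e1 /eqP e2];
  by move: (w_neq _ _ _ _ xy xy'); rewrite e1 e2 ?eqxx // addnC eqxx.
Qed.

Lemma far_pairs_injective k l (phi : 'I_k -> {perm 'I_l}) (d : 'I_k -> nat) (D : nat)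
    (a b : 'I_l) :
  dispersed phi ->
  (forall i x, phi i x <= x + d i /\ x <= phi i x + d i) ->
  (forall i j, i != j -> d i + d j < D) ->
  0 < D -> D <= a - b \/ D <= b - a ->
  injective (fun p : 'I_k * bool => if p.2 then phi p.1 a else phi p.1 b).
Proof.
move=> disp near d_lt D_gt0 far [i c] [j e] /=.
have ab : a != b by apply/eqP => abE; rewrite abE subnn in far; lia.
case: (eqVneq i j) => [<- | ij].
  by case: c e => [] [] // /perm_inj abE; rewrite abE eqxx in ab.
case: c e => [] [] /= E.
- by move: (disp a i j ij); rewrite E eqxx.
- by move/(congr1 (@nat_of_ord l)): E; have := near i a; have := near j b; have := d_lt i j ij; lia.
- by move/(congr1 (@nat_of_ord l)): E; have := near i b; have := near j a; have := d_lt i j ij; lia.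
- by move: (disp b i j ij); rewrite E eqxx.
Qed.

Section HopPerm.
Variables (l t : nat) (p : bool).
Hypothesis odd_t : odd t.

Definition hop_ord (x : 'I_l) : 'I_l := Ordinal (hop_lt t p (ltn_ord x)).

Lemma hop_ord_inj : injective hop_ord.
Proof. by move=> x y /(congr1 val) /(hop_inj odd_t (ltn_ord x) (ltn_ord y)) /val_inj. Qed.

Definition hop_perm : {perm 'I_l} := perm hop_ord_inj.

Lemma hop_permE x : val (hop_perm x) = hop l t p x.
Proof. by rewrite permE. Qed.

End HopPerm.

Lemma hop_perm_edge_disjoint l t p t' p' (ot : odd t) (ot' : odd t') :
  t + t' + 2 <= l -> (t, p) != (t', p') ->
  edge_disjoint (hop_perm l p ot) (hop_perm l p' ot').
Proof.
move=> tt' tp_neq; apply: (edge_disjoint_weight (w := sheet l (~~ p) \o val)).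
move=> x y x' y' /= yE y'E; rewrite !hop_permE yE y'E.
by apply: hop_edge_sum_neq; rewrite // -?yE -?y'E ltn_ord.
Qed.

Definition hop_len (i : nat) : nat := (i./2).*2.+1.

Lemma odd_hop_len i : odd (hop_len i).
Proof. by rewrite /= odd_double. Qed.

Lemma hop_len_le i : hop_len i <= i.+1.
Proof. by rewrite /hop_len; lia. Qed.

Lemma hop_len_odd_inj i j : (hop_len i, odd i) = (hop_len j, odd j) -> i = j.
Proof. by rewrite /hop_len => -[]; lia. Qed.

Lemma hop_len_add k i j : i < k -> j < k -> i != j -> hop_len i + hop_len j + 2 <= 2 * k.
Proof. by rewrite /hop_len; lia. Qed.

Theorem mainTheorem5 (k l : nat) (hk : 0 < k) (hl : 2 * k <= l) :
  exists phi : 'I_k -> {perm 'I_l},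
    [/\ placement phi, dispersed phi &
      forall a b : 'I_l,
        (2 * k - 1 <= val a - val b) \/ (2 * k - 1 <= val b - val a) ->
        (* the 2k vertices phi_i(v_a), phi_j(v_b) are pairwise distinct *)
        injective (fun p : 'I_k * bool =>
                     if p.2 then phi p.1 a else phi p.1 b)].
Proof.
pose phi (i : 'I_k) := hop_perm l (odd i) (odd_hop_len i).
have params_neq (i j : 'I_k) : i != j -> (hop_len i, odd i) != (hop_len j, odd j).
  by apply: contraNneq => /hop_len_odd_inj /val_inj ->.
have lens_lt (i j : 'I_k) : i != j -> hop_len i + hop_len j + 2 <= l.
  by move=> ij; have := hop_len_add (ltn_ord i) (ltn_ord j) ij; lia.
have disp : dispersed phi.
  move=> v i j ij; rewrite -(inj_eq val_inj) !hop_permE.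
  apply: hop_neq (params_neq _ _ ij) (ltn_ord v); rewrite ?odd_hop_len //.
  by have := lens_lt _ _ ij; lia.
exists phi; split => // [i j ij | a b far].
  exact: hop_perm_edge_disjoint (lens_lt _ _ ij) (params_neq _ _ ij).
apply: (far_pairs_injective (d := hop_len \o val)) disp _ _ _ far => [i x | i j ij |]; last by lia.
  rewrite hop_permE /=; apply: hop_near (ltn_ord x) _.
  by have := hop_len_le i; have := ltn_ord i; lia.
by have := hop_len_add (ltn_ord i) (ltn_ord j) ij; rewrite /=; lia.
Qed.
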